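(* Let $A,B$ be finite-dimensional quantum systems with $\dim\mathcal H_A,\dim\mathcal H_B\ge 2$, and let $\rho_A,\rho_B$ be density matrices on $A$ and $B$ respectively. Let $\mathcal S_{AB}$ be the set of separable density matrices on $\mathcal H_A\otimes\mathcal H_B$, and let $\partial\mathcal S_{AB}$ denote its boundary (relative to the real affine space of trace-one Hermitian operators on $\mathcal H_A\otimes\mathcal H_B$). Then $$\rho_A\otimes\rho_B\in\partial\mathcal S_{AB}\iff \det\rho_A\,\det\rho_B=0 .$$
   Context: A density matrix is a positive semidefinite operator of unit trace. A bipartite state is separable if it is a convex combination of product states $\sigma_A\otimes\sigma_B$. A point of a set $S$ is internal if some ball of nonzero radius centred at it (within the ambient affine space) is contained in $S$; the boundary $\partial S$ is the set of non-internal points of $S$. *)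

(* Complex scalars: an arbitrary numClosedFieldType C
   (e.g. algC; the field of complex numbers is such a structure). *)
From HB Require Import structures.
From mathcomp Require Import all_boot all_order all_algebra.
Set Implicit Arguments. Unset Strict Implicit. Unset Printing Implicit Defensive.
Import Order.TTheory GRing.Theory Num.Theory.
Local Open Scope ring_scope.

Section QDefs.
Variable C : numClosedFieldType.

Definition adjmx m n (A : 'M[C]_(m, n)) : 'M[C]_(n, m) := (map_mx Num.conj A)^T.

Definition hermitian n (A : 'M[C]_n) : Prop := adjmx A = A.

Definition psd n (A : 'M[C]_n) : Prop :=
  hermitian A /\ forall v : 'cV[C]_n, 0 <= (adjmx v *m A *m v) 0 0.

Definition density n (A : 'M[C]_n) : Prop := psd A /\ \tr A = 1.

Definition kron m n (A : 'M[C]_m) (B : 'M[C]_n) : 'M[C]_(m * n) :=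
  \sum_(i : 'I_m) \sum_(j : 'I_n) \sum_(i' : 'I_m) \sum_(j' : 'I_n)
     (A i i' * B j j') *: delta_mx (mxvec_index i j) (mxvec_index i' j').

Definition separable m n (rho : 'M[C]_(m * n)) : Prop :=
  exists (k : nat) (w : 'I_k -> C) (sA : 'I_k -> 'M[C]_m) (sB : 'I_k -> 'M[C]_n),
    (forall i, 0 <= w i) /\ \sum_(i < k) w i = 1 /\
    (forall i, density (sA i)) /\ (forall i, density (sB i)) /\
    rho = \sum_(i < k) w i *: kron (sA i) (sB i).

Definition hsnorm2 N (X : 'M[C]_N) : C := \sum_(i < N) \sum_(j < N) `|X i j| ^+ 2.

(* internal point of S, relative to the affine space of trace-one Hermitian
   matrices: some ball of radius sqrt e > 0 around X in that space is in S *)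
Definition internal N (S : 'M[C]_N -> Prop) (X : 'M[C]_N) : Prop :=
  S X /\ exists e : C, 0 < e /\
    forall Y : 'M[C]_N, hermitian Y -> \tr Y = 1 -> hsnorm2 (Y - X) < e -> S Y.

Definition boundary N (S : 'M[C]_N -> Prop) (X : 'M[C]_N) : Prop :=
  S X /\ ~ internal S X.

End QDefs.

From Pilot Require Import Defs.
From HB Require Import structures.
From mathcomp Require Import all_boot all_order all_algebra.
From mathcomp Require Import ring.
Set Implicit Arguments. Unset Strict Implicit. Unset Printing Implicit Defensive.
Import Order.TTheory GRing.Theory Num.Theory.
Local Open Scope ring_scope.

(* Every separable state, in particular [rhoA (x) rhoB], has a nonnegative
   expectation value [<v (x) w| . |v (x) w>] on product vectors.  If
   [det rhoA = 0], some product vector lies in the kernel of [rhoA (x) rhoB];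
   moving the state slightly away from the maximally mixed state then makes
   that expectation negative, so entangled states come arbitrarily close.
   If instead [rhoA >= lA I] and [rhoB >= lB I] with [lA, lB > 0], a nearby
   trace-one Hermitian matrix [rhoA (x) rhoB + Z] is separable: averaging over
   the phases [c] in [{1, -1, i, -i}] writes [z E_(ij,kl) + conj z E_(kl,ij)]
   as a combination of products of the Hermitian perturbations
   [rhoA + t c E_ik + ...] and [rhoB + conj c z / t E_jl + ...], which remain
   positive definite when [Z] is small, and every matrix unit of [Z] is
   absorbed in this way. *)

Section Separability.
Variable C : numClosedFieldType.

Definition mxvec_unindex m n (k : 'I_(m * n)) : 'I_m * 'I_n :=
  enum_val (cast_ord (esym (mxvec_cast m n)) k).

Lemma mxvec_unindexK m n (k : 'I_(m * n)) :
  mxvec_index (mxvec_unindex k).1 (mxvec_unindex k).2 = k.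
Proof. by case/mxvec_indexP: k => i j; rewrite /mxvec_unindex cast_ordK enum_rankK. Qed.

Lemma mxvec_indexK m n (i : 'I_m) (j : 'I_n) :
  mxvec_unindex (mxvec_index i j) = (i, j).
Proof. by rewrite /mxvec_unindex cast_ordK enum_rankK. Qed.

Lemma eq_mxvec_index m n (i i' : 'I_m) (j j' : 'I_n) :
  (mxvec_index i j == mxvec_index i' j') = (i == i') && (j == j').
Proof.
apply/eqP/andP => [eq_ij | [/eqP-> /eqP->]] //.
by have := congr1 (@mxvec_unindex m n) eq_ij; rewrite !mxvec_indexK => -[-> ->].
Qed.

Lemma big_mxvec_index (V : nmodType) m n (F : 'I_(m * n) -> V) :
  \sum_(k < m * n) F k = \sum_(i < m) \sum_(j < n) F (mxvec_index i j).
Proof.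
rewrite pair_big /= (reindex (uncurry (@mxvec_index m n))) /=.
  by apply: eq_bigr => -[i j].
exact: curry_mxvec_bij.
Qed.

Lemma kron_mxE m n (A : 'M[C]_m) (B : 'M[C]_n) :
  kron A B = \matrix_(r, s) (A (mxvec_unindex r).1 (mxvec_unindex s).1 *
                             B (mxvec_unindex r).2 (mxvec_unindex s).2).
Proof.
rewrite [RHS]matrix_sum_delta big_mxvec_index /kron; apply: eq_bigr => i _.
apply: eq_bigr => j _; rewrite big_mxvec_index; apply: eq_bigr => i' _.
by apply: eq_bigr => j' _; rewrite mxE !mxvec_indexK.
Qed.

Lemma kronE m n (A : 'M[C]_m) (B : 'M[C]_n) i j i' j' :
  kron A B (mxvec_index i j) (mxvec_index i' j') = A i i' * B j j'.
Proof. by rewrite kron_mxE mxE !mxvec_indexK. Qed.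

Lemma kronZl m n a (A : 'M[C]_m) (B : 'M[C]_n) : kron (a *: A) B = a *: kron A B.
Proof. by apply/matrixP => r s; rewrite !kron_mxE !mxE mulrA. Qed.

Lemma kronZr m n a (A : 'M[C]_m) (B : 'M[C]_n) : kron A (a *: B) = a *: kron A B.
Proof. by apply/matrixP => r s; rewrite !kron_mxE !mxE mulrCA. Qed.

Lemma kron1 m n : kron (1%:M : 'M[C]_m) (1%:M : 'M[C]_n) = 1%:M.
Proof.
apply/matrixP => r s; rewrite -[r]mxvec_unindexK -[s]mxvec_unindexK kronE.
by rewrite !mxE eq_mxvec_index; case: eqP; case: eqP; rewrite ?mulr1 ?mulr0 ?mul0r.
Qed.

Lemma kron_delta m n (r s : 'I_(m * n)) :
  kron (delta_mx (mxvec_unindex r).1 (mxvec_unindex s).1 : 'M[C]_m)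
       (delta_mx (mxvec_unindex r).2 (mxvec_unindex s).2 : 'M[C]_n) = delta_mx r s.
Proof.
apply/matrixP => a b; rewrite kron_mxE !mxE.
rewrite -{3}[a]mxvec_unindexK -{3}[b]mxvec_unindexK.
rewrite -{3}[r]mxvec_unindexK -{3}[s]mxvec_unindexK !eq_mxvec_index.
by do 4!case: eqP; rewrite ?mulr1 ?mulr0 ?mul0r.
Qed.

Lemma mxtrace_kron m n (A : 'M[C]_m) (B : 'M[C]_n) : \tr (kron A B) = \tr A * \tr B.
Proof.
rewrite /mxtrace big_mxvec_index big_distrl /=; apply: eq_bigr => i _.
by rewrite big_distrr /=; apply: eq_bigr => j _; rewrite kronE.
Qed.

Lemma adjmxD m n (A B : 'M[C]_(m, n)) : adjmx (A + B) = adjmx A + adjmx B.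
Proof. by apply/matrixP => i j; rewrite !mxE rmorphD. Qed.

Lemma adjmxN m n (A : 'M[C]_(m, n)) : adjmx (- A) = - adjmx A.
Proof. by apply/matrixP => i j; rewrite !mxE rmorphN. Qed.

Lemma adjmxZ m n (a : C) (A : 'M[C]_(m, n)) : adjmx (a *: A) = Num.conj a *: adjmx A.
Proof. by apply/matrixP => i j; rewrite !mxE rmorphM. Qed.

Lemma adjmx1 n : adjmx (1%:M : 'M[C]_n) = 1%:M.
Proof. by apply/matrixP => i j; rewrite !mxE eq_sym conjC_nat. Qed.

Lemma adjmxK m n (A : 'M[C]_(m, n)) : adjmx (adjmx A) = A.
Proof. by apply/matrixP => i j; rewrite !mxE conjCK. Qed.

Lemma adjmxM m n p (A : 'M[C]_(m, n)) (B : 'M[C]_(n, p)) :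
  adjmx (A *m B) = adjmx B *m adjmx A.
Proof. by rewrite /adjmx map_mxM trmx_mul. Qed.

Lemma adjmx_delta n (i i' : 'I_n) : adjmx (delta_mx i i' : 'M[C]_n) = delta_mx i' i.
Proof. by apply/matrixP => a b; rewrite !mxE conjC_nat andbC. Qed.

Lemma adjmx_kron m n (A : 'M[C]_m) (B : 'M[C]_n) :
  adjmx (kron A B) = kron (adjmx A) (adjmx B).
Proof. by apply/matrixP => r s; rewrite /adjmx !kron_mxE !mxE rmorphM. Qed.

Lemma hermitian_kron m n (A : 'M[C]_m) (B : 'M[C]_n) :
  Defs.hermitian A -> Defs.hermitian B -> Defs.hermitian (kron A B).
Proof. by move=> hA hB; rewrite /Defs.hermitian adjmx_kron hA hB. Qed.

Lemma conj_ge0 (x : C) : 0 <= x -> Num.conj x = x.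
Proof. by move=> /ger0_real /CrealP. Qed.

Definition qform n (A : 'M[C]_n) (v : 'cV[C]_n) : C := (adjmx v *m A *m v) 0 0.

Lemma qformE n (A : 'M[C]_n) v :
  qform A v = \sum_i \sum_j Num.conj (v i 0) * A i j * v j 0.
Proof.
rewrite /qform mxE exchange_big /=; apply: eq_bigr => i _.
by rewrite mxE big_distrl /=; apply: eq_bigr => j _; rewrite !mxE.
Qed.

Lemma qformD n (A B : 'M[C]_n) v : qform (A + B) v = qform A v + qform B v.
Proof. by rewrite /qform mulmxDr mulmxDl mxE. Qed.

Lemma qformN n (A : 'M[C]_n) v : qform (- A) v = - qform A v.
Proof. by rewrite /qform mulmxN mulNmx mxE. Qed.

Lemma qformZ n (a : C) (A : 'M[C]_n) v : qform (a *: A) v = a * qform A v.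
Proof. by rewrite /qform -scalemxAr -scalemxAl mxE. Qed.

Lemma qform_sum n I (r : seq I) (P : pred I) (F : I -> 'M[C]_n) v :
  qform (\sum_(i <- r | P i) F i) v = \sum_(i <- r | P i) qform (F i) v.
Proof.
elim/big_rec2: _ => [|i x y _ <-]; last by rewrite qformD.
by rewrite /qform mulmx0 mul0mx mxE.
Qed.

Lemma qform1 n (v : 'cV[C]_n) : qform 1%:M v = \sum_i `|v i 0| ^+ 2.
Proof. by rewrite /qform mulmx1 mxE; apply: eq_bigr => i _; rewrite !mxE normCKC. Qed.

Lemma qform1_ge0 n (v : 'cV[C]_n) : 0 <= qform 1%:M v.
Proof. by rewrite qform1 sumr_ge0 // => i _; rewrite exprn_ge0. Qed.

Lemma qform1_ge_entry n (v : 'cV[C]_n) i : `|v i 0| ^+ 2 <= qform 1%:M v.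
Proof. by rewrite qform1 (bigD1 i) //= lerDl sumr_ge0 // => j _; rewrite exprn_ge0. Qed.

Lemma qform1_gt0 n (v : 'cV[C]_n) : v != 0 -> 0 < qform 1%:M v.
Proof.
move=> nz_v; have [i vi_nz] : exists i, v i 0 != 0.
  apply/existsP; apply: contraR nz_v; rewrite negb_exists => /forallP v0.
  by apply/eqP/matrixP => i j; rewrite ord1 mxE; apply/eqP; rewrite -[_ == _]negbK v0.
rewrite qform1 (bigD1 i) //= ltr_pwDl ?exprn_gt0 ?normr_gt0 //.
by apply: sumr_ge0 => j _; rewrite exprn_ge0.
Qed.

Lemma qform_delta n (v : 'cV[C]_n) i i' :
  qform (delta_mx i i') v = Num.conj (v i 0) * v i' 0.
Proof.
rewrite qformE (bigD1 i) //= (bigD1 i') //= !mxE !eqxx /= mulr1.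
rewrite big1 ?addr0 => [|j ji]; last by rewrite mxE eqxx (negbTE ji) mulr0 mul0r.
rewrite big1 ?addr0 // => j ji; apply: big1 => k _.
by rewrite mxE (negbTE ji) /= mulr0 mul0r.
Qed.

Lemma qform_basis n (A : 'M[C]_n) k : qform A (delta_mx k 0) = A k k.
Proof.
rewrite qformE (bigD1 k) //= (bigD1 k) //= !mxE !eqxx /= mulr1 conjC1 mul1r.
rewrite big1 ?addr0 => [|j jk]; last by rewrite mxE (negbTE jk) mulr0.
rewrite big1 ?addr0 // => j jk; apply: big1 => i _.
by rewrite mxE (negbTE jk) /= conjC0 !mul0r.
Qed.

Lemma qform_diag n (d : 'rV[C]_n) v : qform (diag_mx d) v = \sum_i d 0 i * `|v i 0| ^+ 2.
Proof.
rewrite /qform mul_mx_diag mxE; apply: eq_bigr => i _.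
by rewrite !mxE normCKC mulrAC mulrC.
Qed.

Definition vkron m n (v : 'cV[C]_m) (w : 'cV[C]_n) : 'cV[C]_(m * n) :=
  \col_k (v (mxvec_unindex k).1 0 * w (mxvec_unindex k).2 0).

Lemma qform_kron m n (A : 'M[C]_m) (B : 'M[C]_n) v w :
  qform (kron A B) (vkron v w) = qform A v * qform B w.
Proof.
rewrite !qformE big_mxvec_index big_distrl /=; apply: eq_bigr => i _.
rewrite big_distrr /=; apply: eq_bigr => j _.
rewrite big_mxvec_index big_distrl /=; apply: eq_bigr => i' _.
rewrite big_distrr /=; apply: eq_bigr => j' _.
by rewrite kronE !mxE !mxvec_indexK /= rmorphM /=; ring.
Qed.

Lemma det0_qform_kernel n (A : 'M[C]_n) :
  \det A = 0 -> exists2 v : 'cV[C]_n, v != 0 & qform A v = 0.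
Proof.
move=> /eqP /det0P [v nz_v vA0]; exists (adjmx v).
  apply: contra nz_v => /eqP v0; rewrite -(adjmxK v) v0.
  by apply/eqP/matrixP => i j; rewrite !mxE rmorph0.
by rewrite /qform adjmxK vA0 mul0mx mxE.
Qed.

Lemma basis_vec_neq0 n (i : 'I_n) : (delta_mx i 0 : 'cV[C]_n) != 0.
Proof. by apply/eqP => /matrixP /(_ i 0); rewrite !mxE !eqxx => /eqP; rewrite oner_eq0. Qed.

Lemma kron_det0_product_kernel m n (A : 'M[C]_m) (B : 'M[C]_n) :
  (0 < m)%N -> (0 < n)%N -> \det A * \det B = 0 ->
  exists v w, [/\ v != 0, w != 0 & qform (kron A B) (vkron v w) = 0].
Proof.
move=> m_gt0 n_gt0 /eqP; rewrite mulf_eq0 => /orP[] /eqP det0.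
  have [v nz_v vA0] := det0_qform_kernel det0.
  exists v, (delta_mx (Ordinal n_gt0) 0); split; rewrite ?basis_vec_neq0 //.
  by rewrite qform_kron vA0 mul0r.
have [w nz_w wB0] := det0_qform_kernel det0.
exists (delta_mx (Ordinal m_gt0) 0), w; split; rewrite ?basis_vec_neq0 //.
by rewrite qform_kron wB0 mulr0.
Qed.

Lemma psd_qform_ge0 n (A : 'M[C]_n) v : psd A -> 0 <= qform A v.
Proof. by case=> _; apply. Qed.

Lemma separable_kron m n (A : 'M[C]_m) (B : 'M[C]_n) :
  density A -> density B -> separable (kron A B).
Proof.
move=> dA dB; exists 1%N, (fun=> 1), (fun=> A), (fun=> B).
by rewrite big_ord1 scale1r; split; rewrite ?big_ord1 ?ler01.
Qed.

Lemma separable_qform_vkron_ge0 m n (rho : 'M[C]_(m * n)) v w :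
  separable rho -> 0 <= qform rho (vkron v w).
Proof.
case=> k [p [sA [sB [p_ge0 [_ [dA [dB ->]]]]]]].
rewrite qform_sum sumr_ge0 // => i _.
by rewrite qformZ qform_kron !mulr_ge0 // psd_qform_ge0 //; [case: (dA i) | case: (dB i)].
Qed.

Lemma density_normalize n (P : 'M[C]_n) :
  psd P -> 0 < \tr P -> density ((\tr P)^-1 *: P).
Proof.
move=> [hP P_ge0] trP_gt0; have trPV_ge0 : 0 <= (\tr P)^-1 by rewrite invr_ge0 ltW.
split; last by rewrite mxtraceZ mulVf // gt_eqF.
split; first by rewrite /Defs.hermitian adjmxZ hP conj_ge0.
by move=> v; rewrite -/(qform _ _) qformZ mulr_ge0 //; exact: P_ge0.
Qed.

Lemma separable_sum_kron m n (T : finType) (p : T -> C)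
    (P : T -> 'M[C]_m) (Q : T -> 'M[C]_n) (rho : 'M[C]_(m * n)) :
  (forall x, 0 <= p x) ->
  (forall x, psd (P x) /\ 0 < \tr (P x)) -> (forall x, psd (Q x) /\ 0 < \tr (Q x)) ->
  rho = \sum_x p x *: kron (P x) (Q x) -> \tr rho = 1 -> separable rho.
Proof.
move=> p_ge0 P_pos Q_pos rhoE tr_rho.
have trP x : 0 < \tr (P x) by case: (P_pos x).
have trQ x : 0 < \tr (Q x) by case: (Q_pos x).
pose q x := p x * \tr (P x) * \tr (Q x).
have sum_enum (V : nmodType) (F : T -> V) : \sum_(i < #|T|) F (enum_val i) = \sum_x F x.
  rewrite [RHS](reindex (@enum_val T predT)) //.
  by exists enum_rank => [i _ | x _]; rewrite ?enum_valK ?enum_rankK.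
exists #|T|, (q \o enum_val), (fun i => (\tr (P (enum_val i)))^-1 *: P (enum_val i)),
  (fun i => (\tr (Q (enum_val i)))^-1 *: Q (enum_val i)).
split; first by move=> i; rewrite /q !mulr_ge0 // ltW.
split.
  rewrite (sum_enum _ q) -tr_rho rhoE raddf_sum /=.
  by apply: eq_bigr => x _; rewrite mxtraceZ mxtrace_kron /q mulrA.
split; first by move=> i; case: (P_pos (enum_val i)); exact: density_normalize.
split; first by move=> i; case: (Q_pos (enum_val i)); exact: density_normalize.
rewrite (sum_enum _ (fun x => q x *: kron ((\tr (P x))^-1 *: P x) ((\tr (Q x))^-1 *: Q x))).
rewrite rhoE; apply: eq_bigr => x _; rewrite kronZl kronZr !scalerA /q.
by congr (_ *: _); field; rewrite (lt0r_neq0 (trP x)) (lt0r_neq0 (trQ x)).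
Qed.

Lemma hsnorm2_ge0 N (X : 'M[C]_N) : 0 <= hsnorm2 X.
Proof. by apply: sumr_ge0 => i _; apply: sumr_ge0 => j _; rewrite exprn_ge0. Qed.

Lemma hsnorm2_ge_entry N (X : 'M[C]_N) i j : `|X i j| ^+ 2 <= hsnorm2 X.
Proof.
rewrite /hsnorm2 (bigD1 i) //= (bigD1 j) //= -addrA lerDl addr_ge0 //.
  by apply: sumr_ge0 => k _; rewrite exprn_ge0.
by apply: sumr_ge0 => k _; apply: sumr_ge0 => l _; rewrite exprn_ge0.
Qed.

Lemma hsnorm2Z N (t : C) (X : 'M[C]_N) : 0 <= t -> hsnorm2 (t *: X) = t ^+ 2 * hsnorm2 X.
Proof.
move=> t_ge0; rewrite /hsnorm2 big_distrr; apply: eq_bigr => i _.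
by rewrite big_distrr; apply: eq_bigr => j _; rewrite mxE normrM ger0_norm // exprMn.
Qed.

Lemma small_scale_exists (e h : C) : 0 < e -> 0 <= h ->
  exists2 t, 0 < t & t ^+ 2 * h < e.
Proof.
move=> e_gt0 h_ge0; have D_gt0 : 0 < 1 + e + h by rewrite ltr_wpDr // addr_gt0.
exists (e / (1 + e + h)); first exact: divr_gt0.
have t_le1 : e / (1 + e + h) <= 1.
  by rewrite ler_pdivrMr // mul1r addrAC addrC lerDl addr_ge0.
have th_lt : e / (1 + e + h) * h < e.
  by rewrite mulrAC ltr_pdivrMr // !mulrDr mulr1 ltr_pwDl // addr_gt0 // mulr_gt0.
apply: le_lt_trans th_lt; rewrite expr2 -mulrA ler_piMl // mulr_ge0 //.
by rewrite ltW ?divr_gt0.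
Qed.

Lemma not_internal_product_kernel m n (X : 'M[C]_(m * n)) v w :
  (0 < m)%N -> (0 < n)%N -> Defs.hermitian X -> \tr X = 1 ->
  v != 0 -> w != 0 -> qform X (vkron v w) = 0 -> ~ internal (@separable C m n) X.
Proof.
move=> m_gt0 n_gt0 hX trX nz_v nz_w Xvw0 [_ [e [e_gt0 ball_sep]]].
have N_gt0 : 0 < (m * n)%:R :> C by rewrite ltr0n muln_gt0 m_gt0 n_gt0.
set M := X - ((m * n)%:R)^-1 *: 1%:M.
have [t t_gt0 small_t] := small_scale_exists e_gt0 (hsnorm2_ge0 M).
have Y_herm : Defs.hermitian (X + t *: M).
  rewrite /Defs.hermitian /M !(adjmxD, adjmxZ, adjmxN, adjmx1) hX.
  by rewrite !conj_ge0 // ltW ?invr_gt0.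
have trY : \tr (X + t *: M) = 1.
  rewrite /M !(mxtraceD, mxtraceZ, raddfB) /= raddfN /= mxtraceZ mxtrace1 trX.
  by rewrite mulVf ?gt_eqF // subrr mulr0 addr0.
have Y_near : hsnorm2 (X + t *: M - X) < e by rewrite addrC addKr hsnorm2Z // ltW.
have := separable_qform_vkron_ge0 v w (ball_sep _ Y_herm trY Y_near).
rewrite qformD qformZ qformD qformN qformZ -kron1 qform_kron Xvw0 add0r sub0r mulrN.
by rewrite oppr_ge0 lt_geF // !mulr_gt0 ?invr_gt0 ?qform1_gt0.
Qed.

Definition mx_lbound n (l : C) (A : 'M[C]_n) := forall v, l * qform 1%:M v <= qform A v.

Lemma psd_det_neq0_lbound n (A : 'M[C]_n) : (0 < n)%N -> psd A -> \det A != 0 ->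
  exists2 l, 0 < l & mx_lbound l A.
Proof.
move=> n_gt0 [hA A_ge0] detA.
have /orthomx_spectralP A_spectral : A \is normalmx.
  by apply/normalmxP; rewrite -map_trmx -/(adjmx A) hA.
set P := spectralmx A in A_spectral; set d := spectral_diag A in A_spectral.
have PP' : P *m adjmx P = 1%:M by rewrite /adjmx map_trmx; exact/unitarymxP/spectral_unitarymx.
have P'P : adjmx P *m P = 1%:M by exact: mulmx1C.
have AE : A = adjmx P *m diag_mx d *m P.
  by rewrite A_spectral invmx_unitary ?spectral_unitarymx // -map_trmx.
have qformA v : qform A v = qform (diag_mx d) (P *m v) by rewrite /qform AE adjmxM !mulmxA.
have qform1P v : qform 1%:M v = qform 1%:M (P *m v).
  by rewrite /qform !mulmx1 adjmxM -mulmxA (mulmxA (adjmx P)) P'P mul1mx.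
have d_ge0 i : 0 <= d 0 i.
  have := A_ge0 (adjmx P *m delta_mx i 0); rewrite -/(qform A _) qformA mulmxA PP' mul1mx.
  rewrite qform_diag (bigD1 i) //= big1 ?addr0 => [|j ji]; last first.
    by rewrite mxE (negbTE ji) /= normr0 expr0n mulr0.
  by rewrite mxE !eqxx normr1 expr1n mulr1.
have d_neq0 i : d 0 i != 0.
  move: detA; rewrite AE !det_mulmx det_diag mulrAC -det_mulmx P'P det1 mul1r.
  by move/prodf_neq0 => /(_ i isT).
have d_gt0 i : 0 < d 0 i by rewrite lt_def d_neq0 d_ge0.
pose S := \sum_i (d 0 i)^-1.
have S_gt0 : 0 < S.
  rewrite /S (bigD1 (Ordinal n_gt0)) //= ltr_pwDl ?invr_gt0 //.
  by apply: sumr_ge0 => j _; rewrite invr_ge0.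
exists S^-1; first by rewrite invr_gt0.
move=> v; rewrite qformA qform1P qform_diag qform1 mulr_sumr; apply: ler_sum => i _.
rewrite ler_wpM2r ?exprn_ge0 // -div1r ler_pdivrMr // -(mulfV (d_neq0 i)) ler_wpM2l //.
by rewrite /S (bigD1 i) //= lerDl sumr_ge0 // => j _; rewrite invr_ge0.
Qed.

Lemma lbound_psd n l (A : 'M[C]_n) :
  0 <= l -> Defs.hermitian A -> mx_lbound l A -> psd A.
Proof.
by move=> l_ge0 hA lbA; split=> // v; apply: le_trans (lbA v); rewrite mulr_ge0 ?qform1_ge0.
Qed.

Lemma lbound_mxtrace_gt0 n l (A : 'M[C]_n) :
  (0 < n)%N -> 0 < l -> mx_lbound l A -> 0 < \tr A.
Proof.
move=> n_gt0 l_gt0 lbA; have Akk_gt0 k : 0 < A k k.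
  by have := lbA (delta_mx k 0); rewrite !qform_basis mxE eqxx mulr1 => /(lt_le_trans l_gt0).
rewrite /mxtrace (bigD1 (Ordinal n_gt0)) //= ltr_pwDl //.
by apply: sumr_ge0 => k _; exact: ltW.
Qed.

Definition herm_perturb n (A : 'M[C]_n) (b : C) (i i' : 'I_n) :=
  A + b *: delta_mx i i' + Num.conj b *: delta_mx i' i.

Lemma hermitian_herm_perturb n (A : 'M[C]_n) b i i' :
  Defs.hermitian A -> Defs.hermitian (herm_perturb A b i i').
Proof.
rewrite /Defs.hermitian /herm_perturb => hA.
by rewrite !adjmxD !adjmxZ !adjmx_delta hA conjCK addrAC -addrA [X in A + X]addrC addrA.
Qed.

Lemma lbound_herm_perturb n (A : 'M[C]_n) l b i i' :
  mx_lbound l A -> 4%:R * `|b| <= l -> mx_lbound (l / 2%:R) (herm_perturb A b i i').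
Proof.
move=> lbA b_small v; set s := qform 1%:M v.
rewrite !qformD !qformZ !qform_delta.
set z := b * (Num.conj (v i 0) * v i' 0).
have -> : Num.conj b * (Num.conj (v i' 0) * v i 0) = Num.conj z.
  by rewrite /z !rmorphM /= conjCK [X in _ = _ * X]mulrC.
have z_real : z + Num.conj z \is Num.real.
  by apply/CrealP; rewrite rmorphD /= conjCK addrC.
have vv_le : `|v i 0| * `|v i' 0| <= s.
  case/orP: (ger_leVge (normr_ge0 (v i 0)) (normr_ge0 (v i' 0))) => vi_le.
    by apply: le_trans (qform1_ge_entry v i'); rewrite expr2 ler_wpM2r.
  by apply: le_trans (qform1_ge_entry v i); rewrite expr2 ler_wpM2l.
have z_small : `|z + Num.conj z| <= l / 2%:R * s.
  apply: le_trans (ler_normD _ _) _.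
  rewrite norm_conjC -mulr2n /z !normrM norm_conjC.
  apply: (@le_trans _ _ ((`|b| * s) *+ 2)); first by rewrite lerMn2r /= ler_wpM2l.
  have -> : l / 2%:R * s = (l / 4%:R * s) *+ 2 by rewrite -mulr_natr; field.
  by rewrite lerMn2r /= ler_wpM2r ?qform1_ge0 // ler_pdivlMr ?ltr0n // mulrC.
have [/[1!lerNl] z_lb _] := (real_ler_normlP z_real) z_small.
rewrite -addrA; apply: le_trans _ (lerD (lbA v) z_lb); rewrite -/s.
by rewrite [X in _ <= X](_ : _ = l / 2%:R * s) //; field.
Qed.

Lemma herm_perturb_psd n (A : 'M[C]_n) l b i i' :
  (0 < n)%N -> 0 < l -> Defs.hermitian A -> mx_lbound l A -> 4%:R * `|b| <= l ->
  psd (herm_perturb A b i i') /\ 0 < \tr (herm_perturb A b i i').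
Proof.
move=> n_gt0 l_gt0 hA lbA b_small.
have l2_gt0 : 0 < l / 2%:R by rewrite divr_gt0 ?ltr0n.
have lbP := lbound_herm_perturb i i' lbA b_small.
split; last exact: lbound_mxtrace_gt0 lbP.
by apply: lbound_psd (ltW l2_gt0) (hermitian_herm_perturb _ _ _ hA) lbP.
Qed.

Definition phase (k : 'I_4) : C := nth 0 [:: 1; -1; 'i; -'i] k.

Lemma norm_phase k : `|phase k| = 1.
Proof. by case: k => -[|[|[|[|k]]]] k_lt4 //; rewrite /phase /= ?normrN ?normr1 ?normCi. Qed.

(* Only the cross terms with coefficient [phase k * conj (phase k) = 1] survive
   the average over the four phases. *)
Lemma phase_polarization (a x y b p q z t : C) : t != 0 -> Num.conj t = t ->
  \sum_k (a + t * phase k * x + Num.conj (t * phase k) * y) *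
     (b + Num.conj (phase k) * z / t * p + Num.conj (Num.conj (phase k) * z / t) * q)
  = 4%:R * (a * b + z * x * p + Num.conj z * y * q).
Proof.
move=> t_neq0 t_real; rewrite !big_ord_recr big_ord0 /phase /= add0r.
rewrite !(rmorphM, rmorphN, fmorphV, rmorph1) /= ?conjCi ?conjCK ?opprK t_real.
apply/eqP; rewrite -subr_eq0; apply/eqP.
transitivity (('i ^+ 2 + 1) * 2%:R *
  (x * Num.conj z * q + y * z * p - z * x * p - Num.conj z * y * q)).
  by rewrite !rmorphN /= !conjCi !opprK; field.
by rewrite sqrCi addNr !mul0r.
Qed.

Lemma sum_kron_herm_perturb m n (A : 'M[C]_m) (B : 'M[C]_n) i i' j j' (t z : C) :
  t != 0 -> Num.conj t = t ->
  \sum_k kron (herm_perturb A (t * phase k) i i')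
              (herm_perturb B (Num.conj (phase k) * z / t) j j')
  = 4%:R *: (kron A B + z *: kron (delta_mx i i') (delta_mx j j')
             + Num.conj z *: kron (delta_mx i' i) (delta_mx j' j)).
Proof.
move=> t_neq0 t_real; apply/matrixP => r s; rewrite summxE.
under eq_bigr => k _ do rewrite kron_mxE !mxE.
by rewrite phase_polarization // !kron_mxE !mxE !mulrA.
Qed.

Definition perturb_left m n (A : 'M[C]_m) (t : C)
    (p : 'I_(m * n) * 'I_(m * n)) (k : 'I_4) :=
  herm_perturb A (t * phase k) (mxvec_unindex p.1).1 (mxvec_unindex p.2).1.

Definition perturb_right m n (B : 'M[C]_n) (t z : C)
    (p : 'I_(m * n) * 'I_(m * n)) (k : 'I_4) :=
  herm_perturb B (Num.conj (phase k) * z / t) (mxvec_unindex p.1).2 (mxvec_unindex p.2).2.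

(* Each of the [K = (m n)^2] index pairs receives the share [1 / K] of
   [A (x) B]; the factor [K / 2] in front of [Z] compensates, and the pairs
   [(r, s)] and [(s, r)] together produce the entry [Z r s] since [Z] is
   Hermitian. *)
Lemma kron_add_decomposition m n (A : 'M[C]_m) (B : 'M[C]_n) t (Z : 'M[C]_(m * n)) :
  (0 < m)%N -> (0 < n)%N -> t != 0 -> Num.conj t = t -> Defs.hermitian Z ->
  \sum_p \sum_k (4%:R * (m * n * (m * n))%:R)^-1 *:
     kron (perturb_left A t p k)
          (perturb_right B t ((m * n * (m * n))%:R / 2%:R * Z p.1 p.2) p k)
  = kron A B + Z.
Proof.
move=> m_gt0 n_gt0 t_neq0 t_real hZ.
set K : C := (m * n * (m * n))%:R.
have K_neq0 : K != 0 by rewrite pnatr_eq0 -lt0n !muln_gt0 m_gt0 n_gt0.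
set z := fun p : 'I_(m * n) * 'I_(m * n) => K / 2%:R * Z p.1 p.2.
have sum_phases p : \sum_k (4%:R * K)^-1 *:
      kron (perturb_left A t p k) (perturb_right B t (z p) p k)
    = K^-1 *: kron A B + (K^-1 * z p) *: delta_mx p.1 p.2
      + (K^-1 * Num.conj (z p)) *: delta_mx p.2 p.1.
  rewrite -scaler_sumr sum_kron_herm_perturb // !kron_delta !scalerA !scalerDr !scalerA.
  by congr (_ *: _ + _ *: _ + _ *: _); field; rewrite !pnatr_eq0 -!lt0n m_gt0 n_gt0.
have Z_conj a b : Num.conj (Z b a) = Z a b.
  by have /matrixP/(_ a b) := hZ; rewrite !mxE.
rewrite (eq_bigr _ (fun p _ => sum_phases p)) !big_split /=.
rewrite sumr_const card_prod !card_ord scalerMnl -mulr_natr mulVf // scale1r -addrA.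
congr (_ + _).
rewrite -(pair_bigA _ (fun a b => (K^-1 * z (a, b)) *: delta_mx a b)).
rewrite -(pair_bigA _ (fun a b => (K^-1 * Num.conj (z (a, b))) *: delta_mx b a)) /=.
rewrite [in X in _ + X]exchange_big /=.
rewrite -big_split [RHS]matrix_sum_delta; apply: eq_bigr => a _ /=.
rewrite -big_split; apply: eq_bigr => b _ /=.
rewrite -scalerDl /z /= rmorphM /= Z_conj conj_ge0 ?divr_ge0 ?ler0n //; congr (_ *: _).
by field; rewrite !pnatr_eq0 -!lt0n m_gt0 n_gt0.
Qed.

Lemma internal_kron m n (A : 'M[C]_m) (B : 'M[C]_n) :
  (0 < m)%N -> (0 < n)%N -> density A -> density B ->
  \det A != 0 -> \det B != 0 -> internal (@separable C m n) (kron A B).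
Proof.
move=> m_gt0 n_gt0 dA dB detA detB.
split; first exact: separable_kron.
have [[psdA _] [psdB _]] := (dA, dB); have [[hA _] [hB _]] := (psdA, psdB).
have [lA lA_gt0 lbA] := psd_det_neq0_lbound m_gt0 psdA detA.
have [lB lB_gt0 lbB] := psd_det_neq0_lbound n_gt0 psdB detB.
(* [t] and [d] are chosen so that both families of perturbations satisfy
   the hypothesis [4 |b| <= l] of [herm_perturb_psd]. *)
set t := lA / 4%:R; set K : C := (m * n * (m * n))%:R.
have t_gt0 : 0 < t by rewrite divr_gt0 ?ltr0n.
have K_gt0 : 0 < K by rewrite ltr0n !muln_gt0 m_gt0 n_gt0.
set d := lB * t / (2%:R * K).
have d_gt0 : 0 < d := divr_gt0 (mulr_gt0 lB_gt0 t_gt0) (mulr_gt0 (ltr0Sn _ 1) K_gt0).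
exists (d ^+ 2); split=> [|Y hY trY Y_near]; first by rewrite exprn_gt0.
set Z := Y - kron A B.
have hZ : Defs.hermitian Z.
  by rewrite /Defs.hermitian /Z adjmxD adjmxN hY (hermitian_kron hA hB).
have Z_small a b : `|Z a b| <= d.
  have := le_lt_trans (hsnorm2_ge_entry Z a b) Y_near.
  by rewrite ltr_pXn2r ?nnegrE ?normr_ge0 ?(ltW d_gt0) //; exact: ltW.
have t_real : Num.conj t = t by rewrite conj_ge0 ?ltW.
have := kron_add_decomposition A B m_gt0 n_gt0 (lt0r_neq0 t_gt0) t_real hZ.
rewrite pair_bigA /= [kron A B + Z]addrC subrK => YE.
apply: (separable_sum_kron _ _ _ (esym YE) trY) => [x | x | x].
- by rewrite invr_ge0 mulr_ge0 ?ler0n // ltW.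
- rewrite /perturb_left; apply: (herm_perturb_psd _ _ m_gt0 lA_gt0 hA lbA).
  by rewrite normrM norm_phase mulr1 gtr0_norm // mulrC divfK ?pnatr_eq0.
- rewrite /perturb_right; apply: (herm_perturb_psd _ _ n_gt0 lB_gt0 hB lbB).
  rewrite !normrM !normfV norm_conjC norm_phase mul1r !normr_nat (gtr0_norm t_gt0) -/K.
  have -> : lB = 4%:R * (K / 2%:R * d / t).
    by rewrite /d; field; rewrite lt0r_neq0 // !pnatr_eq0 -!lt0n m_gt0 n_gt0.
  rewrite ler_pM2l ?ltr0n // ler_pM2r ?invr_gt0 // ler_pM2l ?divr_gt0 ?ltr0n //.
  by rewrite !muln_gt0 m_gt0 n_gt0.
Qed.

End Separability.

Unset Implicit Arguments.

Theorem mainTheorem1 (C : numClosedFieldType) (m n : nat)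
  (hm : (2 <= m)%N) (hn : (2 <= n)%N)
  (rhoA : 'M[C]_m) (rhoB : 'M[C]_n)
  (hA : density rhoA) (hB : density rhoB) :
  boundary (@separable C m n) (kron rhoA rhoB) <-> \det rhoA * \det rhoB = 0.
Proof.
have m_gt0 : (0 < m)%N by apply: leq_trans hm.
have n_gt0 : (0 < n)%N by apply: leq_trans hn.
split=> [[_ not_internal] | det0].
  apply/eqP; rewrite mulf_eq0; apply: contraT; rewrite negb_or => /andP[detA detB].
  by case: not_internal; apply: internal_kron.
split; first exact: separable_kron.
have [v [w [nz_v nz_w kernel]]] := kron_det0_product_kernel m_gt0 n_gt0 det0.
have [[[hA' _] trA] [[hB' _] trB]] := (hA, hB).
apply: not_internal_product_kernel m_gt0 n_gt0 _ _ nz_v nz_w kernel.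
  exact: hermitian_kron.
by rewrite mxtrace_kron trA trB mulr1.
Qed.
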